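(* Let $\gamma > 1$ and let $I$ be a $\gamma$-stable instance of the metric Steiner tree problem with optimal Steiner tree $\mathrm{OPT}$. Let $H$ be a subgraph of $\mathrm{OPT}$ with at least one edge, and let $ab$ be an edge of $H$. If $c \in V(\mathrm{OPT}) \setminus V(H)$ satisfies $w_{ca} \le \gamma(\gamma - 1) w_{ab}$, then $ca$ is an edge of $\mathrm{OPT}$.
   Context: An instance of the metric Steiner tree problem consists of a finite set $V$ of points of a metric space with metric $d$, a set $T \subseteq V$ of terminals, and the complete graph on $V$ with edge weights $w_{uv} = d(u,v)$. Points of $V \setminus T$ are Steiner points. A Steiner tree is a tree in this complete graph whose vertex set contains all of $T$; its weight is the sum of its edge weights. For $\gamma > 1$, the instance is $\gamma$-stable if it has a minimum-weight Steiner tree $\mathrm{OPT}$ such that for every $w' : V \times V \to \mathbb{R}_{\ge 0}$ with $w_{uv} \le w'_{uv} \le \gamma w_{uv}$ for all $u,v$, every minimum-weight Steiner tree with respect to $w'$ equals $\mathrm{OPT}$. $V(\mathrm{OPT})$ and $V(H)$ denote vertex sets. *)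

From mathcomp Require Import all_boot all_order all_algebra.
Set Implicit Arguments. Unset Strict Implicit. Unset Printing Implicit Defensive.
Import Order.TTheory GRing.Theory Num.Theory.
Local Open Scope ring_scope.

Section Steiner.
Variables (R : realFieldType) (V : finType).

Definition is_metric (d : V -> V -> R) : Prop :=
  [/\ forall x y, d x y = 0 <-> x = y,
      forall x y, d x y = d y x &
      forall x y z, d x z <= d x y + d y z].

Definition is_edge (e : {set V}) : bool := #|e| == 2%N.

(* Edge weight induced by d: for e = {u,v}, this is d u v. *)
Definition wd (d : V -> V -> R) (e : {set V}) : R :=
  (\sum_(u in e) \sum_(v in e) d u v) / 2.

Definition graph := ({set V} * {set {set V}})%type.

Definition adj (E : {set {set V}}) : rel V := fun x y => (x != y) && ([set x; y] \in E).

Definition wf_graph (G : graph) : Prop :=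
  forall e, e \in G.2 -> is_edge e && (e \subset G.1).

Definition connected_graph (G : graph) : Prop :=
  forall u v, u \in G.1 -> v \in G.1 -> connect (adj G.2) u v.

Definition acyclic_graph (G : graph) : Prop :=
  ~ exists s : seq V, [&& (2 < size s)%N, uniq s & cycle (adj G.2) s].

Definition is_tree (G : graph) : Prop :=
  [/\ wf_graph G, G.1 != set0, connected_graph G & acyclic_graph G].

Definition steiner_tree (T : {set V}) (G : graph) : Prop :=
  is_tree G /\ T \subset G.1.

Definition tree_weight (w : {set V} -> R) (G : graph) : R := \sum_(e in G.2) w e.

Definition min_steiner_tree (w : {set V} -> R) (T : {set V}) (G : graph) : Prop :=
  steiner_tree T G /\
  forall G', steiner_tree T G' -> tree_weight w G <= tree_weight w G'.

Definition perturbation (gamma : R) (d : V -> V -> R) (w' : {set V} -> R) : Prop :=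
  forall e, is_edge e -> 0 <= w' e /\ wd d e <= w' e <= gamma * wd d e.

Definition stable (gamma : R) (d : V -> V -> R) (T : {set V}) : Prop :=
  exists OPT : graph, min_steiner_tree (wd d) T OPT /\
    forall w', perturbation gamma d w' ->
      forall G, min_steiner_tree w' T G -> G = OPT.

Definition subgraph (H G : graph) : Prop :=
  [/\ wf_graph H, H.1 \subset G.1 & H.2 \subset G.2].

End Steiner.

(** The exchange argument behind stability: if [pq] is an edge of OPT and
    [uv] is a non-edge joining the two components of OPT - pq, then
    OPT - pq + uv contains a Steiner tree different from OPT; making [pq]
    [gamma] times heavier must not make that tree competitive, which forces
    [gamma * d p q < d u v].  For two adjacent edges [mu], [mv] of OPT this
    gives, through the triangle inequality, [(gamma - 1) * d m u < d m v].
    Now if [ca] is not an edge of OPT, let [pq] be the first edge of the OPT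
    path from [a] to [c] that leaves the edge [ab] (so [p] is [a] or [b]);
    the two bounds combine into [gamma * (gamma - 1) * d a b < d a c]. *)

From mathcomp Require Import all_boot all_order all_algebra.
From mathcomp Require Import boolp lra.
Set Implicit Arguments. Unset Strict Implicit. Unset Printing Implicit Defensive.
Import Order.TTheory GRing.Theory Num.Theory.
Local Open Scope ring_scope.

Lemma exists_minimizer (X : finType) disp (O : orderType disp) (P : X -> Prop)
    (f : X -> O) :
  (exists x, P x) -> exists2 x, P x & forall y, P y -> (f x <= f y)%O.
Proof.
case=> x0 Px0; have Px0b : `[< P x0 >] by apply/asboolP.
case: (@arg_minP _ _ _ x0 (fun x => `[< P x >]) f Px0b) => x /asboolP Px minx.
by exists x => // y /asboolP /minx.
Qed.
Arguments exists_minimizer {X disp O P} f.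

Section Graphs.
Variable V : finType.
Implicit Types (E F : {set {set V}}) (G : graph V).

Lemma adj_sym E : symmetric (adj E).
Proof. by move=> x y; rewrite /adj eq_sym setUC. Qed.

Lemma connect_adjC E : connect_sym (adj E).
Proof. exact/sym_connect_sym/adj_sym. Qed.

Lemma adj_sub E F : E \subset F -> subrel (adj E) (adj F).
Proof. by move=> /subsetP EF x y; rewrite /adj => /andP [-> /EF]. Qed.

Lemma set2_neq (x y z w : V) : z \notin [set x; y] -> [set z; w] != [set x; y].
Proof. by apply: contraNneq => <-; rewrite set21. Qed.

Lemma adj_setD1 E e x y : adj E x y -> [set x; y] != e -> adj (E :\ e) x y.
Proof. by case/andP=> xy xyE ne; rewrite /adj xy in_setD1 ne xyE. Qed.

Lemma path_setD1 E x s z w :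
  path (adj E) x s -> z \notin x :: s -> path (adj (E :\ [set z; w])) x s.
Proof.
move=> pxs zs; apply: (sub_in_path (P := predC1 z)) pxs; last first.
  by apply/allP => y ys /=; apply: contraNneq zs => <-.
move=> u v /= zu zv uv; apply: (adj_setD1 uv); rewrite eq_sym set2_neq //.
by move: zu zv; rewrite !inE negb_or => zu zv; rewrite !(eq_sym z) zu zv.
Qed.

Lemma path_connect_setD1 E x s z :
  path (adj E) x s -> z \notin x :: s ->
  connect (adj (E :\ [set z; x])) x (last x s).
Proof. by move=> pxs zs; apply/connectP; exists s => //; apply: path_setD1. Qed.

Lemma connect_setD1_cases E p q z :
  connect (adj E) p z ->
  connect (adj (E :\ [set p; q])) p z || connect (adj (E :\ [set p; q])) q z.
Proof.
set K := connect (adj (E :\ [set p; q])).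
have closedK : closed (adj E) [pred z | K p z || K q z].
  apply: intro_closed => [|x y xy]; first exact: connect_adjC.
  have [pq|ne] := eqVneq [set x; y] [set p; q].
    have : y \in [set p; q] by rewrite -pq set22.
    by rewrite in_set2 => /orP [] /eqP -> _; apply/orP; [left|right]; apply: connect0.
  have xy_del := connect1 (adj_setD1 xy ne).
  by rewrite !inE /K => /orP [] /connect_trans /(_ xy_del) ->; rewrite ?orbT.
by move/(closed_connect closedK); rewrite !inE /K connect0 => <-.
Qed.

Lemma cycle_edge_bypass E x y r :
  uniq [:: x, y & r] -> cycle (adj E) [:: x, y & r] -> r != [::] ->
  connect (adj (E :\ [set x; y])) y x.
Proof.
case: r => [|z r] // /andP [xs /andP [ys _]].
rewrite /cycle rcons_path => /andP [/andP [_ pyr] lastx] _.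
have {}pyr : path (adj E) y (z :: r) := pyr.
apply: connect_trans (path_connect_setD1 pyr xs) (connect1 _).
apply: adj_setD1; first exact: lastx.
apply: set2_neq; rewrite in_set2 negb_or.
have lastr := mem_last z r.
by apply/andP; split; [apply: contraNneq xs | apply: contraNneq ys] => /= <- //;
  rewrite in_cons lastr orbT.
Qed.

Lemma connect_setD1_bypass E x y :
  connect (adj (E :\ [set x; y])) y x ->
  subrel (connect (adj E)) (connect (adj (E :\ [set x; y]))).
Proof.
move=> cyx; apply: connect_sub => u v uv.
have [uvxy|ne] := eqVneq [set u; v] [set x; y]; last exact/connect1/adj_setD1.
have : u \in [set x; y] by rewrite -uvxy set21.
have : v \in [set x; y] by rewrite -uvxy set22.
case/andP: uv => neuv _.
by rewrite !in_set2 => /orP [] /eqP -> /orP [] /eqP ->;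
  rewrite ?eqxx // connect_adjC in neuv *.
Qed.

Lemma wf_edge_neq G x y : wf_graph G -> [set x; y] \in G.2 -> x != y.
Proof. by move=> wfG /wfG /andP []; rewrite /is_edge cards2; case: (x != y). Qed.

Lemma wf_edge_vertices G x y :
  wf_graph G -> [set x; y] \in G.2 -> (x \in G.1) && (y \in G.1).
Proof. by move=> wfG /wfG /andP [_ /subsetP sub]; rewrite !sub ?set21 ?set22. Qed.

Lemma acyclic_triangle G m u v :
  acyclic_graph G -> [set m; u] \in G.2 -> [set m; v] \in G.2 ->
  uniq [:: m; u; v] -> [set u; v] \notin G.2.
Proof.
move=> acG muG mvG; rewrite /= !inE !negb_or => /andP [/andP [mu mv] /andP [uv _]].
apply/negP => uvG; apply: acG; exists [:: m; u; v].
by rewrite /= !inE !negb_or mu mv uv /adj /= mu uv eq_sym mv muG uvG setUC mvG.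
Qed.

Lemma connected_graph_spanning_tree G :
  wf_graph G -> G.1 != set0 -> connected_graph G ->
  exists2 M : graph V, is_tree M & M.1 = G.1 /\ M.2 \subset G.2.
Proof.
move=> wfG neG connG.
pose P E := E \subset G.2 /\ connected_graph (G.1, E).
have [E [EG connE] minE] :=
  exists_minimizer (fun E => #|E|) (ex_intro P _ (conj (subxx _) connG)).
exists (G.1, E) => //; split=> //= [e /(subsetP EG) /wfG //|].
case=> -[|x [|y r]] // /and3P [size_r uniq_s cycle_s].
have xyE : [set x; y] \in E by case/andP: cycle_s => /andP [].
have r_ne : r != [::] by case: r size_r {uniq_s cycle_s}.
have bypass := cycle_edge_bypass uniq_s cycle_s r_ne.
have /minE : P (E :\ [set x; y]).
  split=> [|u v u1 v1]; first exact: subset_trans (subD1set _ _) EG.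
  exact: connect_setD1_bypass bypass _ _ (connE u v u1 v1).
by rewrite leEnat (cardsD1 [set x; y] E) xyE ltnn.
Qed.

Lemma connected_exchange G p q u v :
  connected_graph G -> p \in G.1 -> u != v ->
  connect (adj (G.2 :\ [set p; q])) p u -> connect (adj (G.2 :\ [set p; q])) q v ->
  connected_graph (G.1, [set u; v] |: (G.2 :\ [set p; q])).
Proof.
move=> connG pG uv cpu cqv z1 z2 z1G z2G /=.
set E := G.2 :\ [set p; q].
have sub : subrel (connect (adj E)) (connect (adj ([set u; v] |: E))).
  by apply: connect_sub => x y /(adj_sub (subsetUr _ _)) /connect1.
have cpq : connect (adj ([set u; v] |: E)) p q.
  apply: connect_trans (sub _ _ cpu) _.
  apply: connect_trans (connect1 (_ : adj _ u v)) _; first by rewrite /adj uv setU11.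
  by rewrite connect_adjC; apply: sub.
have from_p z : z \in G.1 -> connect (adj ([set u; v] |: E)) p z.
  move=> zG; case/orP: (connect_setD1_cases q (connG p z pG zG)) => /sub //.
  exact: connect_trans cpq.
by apply: connect_trans (from_p _ z2G); rewrite connect_adjC; apply: from_p.
Qed.

End Graphs.

Lemma tree_weight_subset (R : realFieldType) (V : finType) (w : {set V} -> R)
    (G G' : graph V) :
  (forall e, e \in G'.2 -> 0 <= w e) -> G.2 \subset G'.2 ->
  tree_weight w G <= tree_weight w G'.
Proof.
move=> w_ge0 sub; rewrite /tree_weight [leRHS](big_setID G.2) /= (setIidPr sub).
by rewrite lerDl sumr_ge0 // => e /setDP [/w_ge0].
Qed.

Section Metric.
Variables (R : realFieldType) (V : finType) (d : V -> V -> R).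
Hypothesis metric_d : is_metric d.

Lemma metric_refl x : d x x = 0.
Proof. by case: metric_d => refl _ _; apply/refl. Qed.

Lemma metric_sym x y : d x y = d y x.
Proof. by case: metric_d. Qed.

Lemma metric_triangle x y z : d x z <= d x y + d y z.
Proof. by case: metric_d. Qed.

Lemma metric_ge0 x y : 0 <= d x y.
Proof.
have := metric_triangle x y x; rewrite metric_refl (metric_sym y x); lra.
Qed.

Lemma wd_ge0 e : 0 <= wd d e.
Proof.
by rewrite divr_ge0 // sumr_ge0 // => u _; rewrite sumr_ge0 // => v _; apply: metric_ge0.
Qed.

Lemma wd_set2 x y : wd d [set x; y] = d x y.
Proof.
have [<-|xy] := eqVneq x y.
  by rewrite /wd setUid !big_set1 metric_refl mul0r.
have sum2 (F : V -> R) : \sum_(u in [set x; y]) F u = F x + F y.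
  by rewrite big_setU1 ?inE //= big_set1.
rewrite /wd !sum2 !metric_refl (metric_sym y x); lra.
Qed.

End Metric.

Section Stability.
Variables (R : realFieldType) (V : finType) (d : V -> V -> R) (T : {set V})
  (gamma : R) (OPT : graph V).
Hypotheses (metric_d : is_metric d) (gamma_gt1 : 1 < gamma)
  (stable_T : stable gamma d T) (OPT_min : min_steiner_tree (wd d) T OPT).

Let gamma_gt0 : 0 < gamma. Proof. exact: lt_trans gamma_gt1. Qed.

Lemma perturbation_wd : perturbation gamma d (wd d).
Proof.
move=> e _; have e_ge0 := wd_ge0 metric_d e.
by split=> //; rewrite lexx ler_peMl // ltW.
Qed.

Lemma stable_unique w' G :
  perturbation gamma d w' -> min_steiner_tree w' T G -> G = OPT.
Proof.
case: stable_T => O [_ O_unique] pw' Gmin.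
by rewrite (O_unique _ pw' _ Gmin) -(O_unique _ perturbation_wd _ OPT_min).
Qed.

Lemma stable_lt w' M :
  perturbation gamma d w' -> steiner_tree T M -> M <> OPT ->
  tree_weight w' OPT < tree_weight w' M.
Proof.
move=> pw' stM neM.
have [m stm minm] := exists_minimizer (tree_weight w') (ex_intro _ M stM).
have <- : m = OPT by apply: (stable_unique pw').
rewrite lt_neqAle minm // andbT; apply/eqP => eqw; apply: neM.
by apply: (stable_unique pw'); split=> // G stG; rewrite -eqw minm.
Qed.

Lemma stable_exchange p q u v :
  [set p; q] \in OPT.2 -> u \in OPT.1 -> v \in OPT.1 -> u != v ->
  [set u; v] \notin OPT.2 ->
  connect (adj (OPT.2 :\ [set p; q])) p u ->
  connect (adj (OPT.2 :\ [set p; q])) q v ->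
  gamma * d p q < d u v.
Proof.
move=> pqO uO vO uv uvO cpu cqv.
have [[[wfO neO connO _] TO] _] := OPT_min.
set e := [set p; q] in pqO cpu cqv *.
set G := (OPT.1, [set u; v] |: (OPT.2 :\ e)).
have wfG : wf_graph G.
  move=> f /=; rewrite in_setU1 in_setD1 => /predU1P [->|/andP [_ /wfO //]].
  by rewrite /is_edge cards2 uv; apply/subsetP => z /set2P [] ->.
have /andP [pO _] := wf_edge_vertices wfO pqO.
have [M treeM [M1 M2]] := connected_graph_spanning_tree wfG neO
  (connected_exchange connO pO uv cpu cqv).
have neM : M <> OPT.
  move=> M_OPT; have := subsetP M2 e; rewrite M_OPT pqO => /(_ isT).
  by rewrite /= in_setU1 setD11 orbF => /eqP e_uv; rewrite -e_uv pqO in uvO.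
pose w' f := if f == e then gamma * wd d f else wd d f.
have w'_ge0 f : 0 <= w' f.
  have f_ge0 := wd_ge0 metric_d f.
  by rewrite /w'; case: ifP => // _; rewrite mulr_ge0 // ltW.
have pw' : perturbation gamma d w'.
  move=> f _; split; first exact: w'_ge0.
  have le_f := ler_peMl (wd_ge0 metric_d f) (ltW gamma_gt1).
  by rewrite /w'; case: ifP => _; rewrite ?le_f lexx.
have := stable_lt pw' (conj treeM (_ : T \subset M.1)) neM.
rewrite M1 TO => /(_ isT) /lt_le_trans.
move=> /(_ _ (tree_weight_subset (fun f _ => w'_ge0 f) M2)).
have uv_ne_e : ([set u; v] == e) = false by apply: contraNF uvO => /eqP ->.
rewrite /tree_weight /= big_setU1 /=; last by rewrite in_setD1 negb_and uvO orbT.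
by rewrite (big_setD1 e pqO) /= /w' eqxx uv_ne_e !(wd_set2 metric_d) ltrD2r.
Qed.

Lemma stable_adjacent_edges m u v :
  [set m; u] \in OPT.2 -> [set m; v] \in OPT.2 -> uniq [:: m; u; v] ->
  (gamma - 1) * d m u < d m v.
Proof.
have [[[wfO _ _ acO] _] _] := OPT_min.
move=> muO mvO muv; move: (muv); rewrite /= !inE !negb_or.
case/andP=> /andP [mu mv] /andP [uv _].
have vuO : [set v; u] \notin OPT.2 by rewrite setUC (acyclic_triangle acO muO mvO muv).
have /andP [_ uO] := wf_edge_vertices wfO muO.
have /andP [_ vO] := wf_edge_vertices wfO mvO.
have cmv : connect (adj (OPT.2 :\ [set m; u])) m v.
  apply/connect1/adj_setD1; first by rewrite /adj mv mvO.
  by rewrite setUC set2_neq // in_set2 negb_or eq_sym mv eq_sym uv.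
have := stable_exchange muO vO uO (_ : v != u) vuO cmv (connect0 _ u).
have := metric_triangle metric_d v m u.
rewrite eq_sym uv (metric_sym metric_d v m) (metric_sym metric_d v u); lra.
Qed.

Lemma stable_nonedge_bound a b c :
  [set a; b] \in OPT.2 -> c \in OPT.1 -> c \notin [set a; b] ->
  [set a; c] \notin OPT.2 -> gamma * (gamma - 1) * d a b < d a c.
Proof.
have [[[wfO _ connO _] _] _] := OPT_min.
move=> abO cO cab acO; have ab := wf_edge_neq wfO abO.
have /andP [aO _] := wf_edge_vertices wfO abO.
move: cab; rewrite in_set2 negb_or => /andP [ca cb].
have ac : a != c by rewrite eq_sym.
suff [t t_gt t_lt] : exists2 t, (gamma - 1) * d a b < t & gamma * t < d a c.
  by rewrite -mulrA; apply: le_lt_trans t_lt; rewrite ler_pM2l // ltW.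
have /connectP [s0 p0 c_last] := connO a c aO cO.
move: c_last; case: (shortenP p0) => -[|x s] ps us _ c_last {p0 s0}.
  by rewrite c_last /= eqxx in ac.
case/andP: ps => /andP [_ axO] ps.
have [xb|xb] := eqVneq x b.
- subst x; case: s ps us c_last => [|y s] ps us c_last.
    by rewrite c_last /= eqxx in cb.
  case/andP: ps => /andP [_ byO] ps.
  move: us; rewrite /= !inE !negb_or => /and4P [/and3P [_ ay _] /andP [by' bs] _ _].
  exists (d b y).
  - rewrite (metric_sym metric_d a b); apply: (stable_adjacent_edges _ byO).
      by rewrite setUC.
    by rewrite /= !inE !negb_or eq_sym ab by' ay.
  - apply: stable_exchange byO aO cO ac acO _ _.
      apply/connect1/adj_setD1; first by rewrite /adj eq_sym ab setUC abO.
      by rewrite setUC set2_neq // in_set2 negb_or ab ay.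
    by rewrite c_last; apply: path_connect_setD1 ps _; rewrite in_cons negb_or by' bs.
case/andP: us => a_xs _.
have ax : a != x by apply: contraNneq a_xs => ->; rewrite mem_head.
exists (d a x).
  by apply: stable_adjacent_edges abO axO _; rewrite /= !inE !negb_or ab ax eq_sym xb.
apply: stable_exchange axO aO cO ac acO (connect0 _ a) _.
by rewrite c_last; apply: path_connect_setD1 ps _.
Qed.

End Stability.

Theorem mainTheorem7 (R : realFieldType) (V : finType) (d : V -> V -> R)
  (T : {set V}) (gamma : R) (OPT H : graph V) (a b c : V) :
  is_metric d -> 1 < gamma ->
  stable gamma d T -> min_steiner_tree (wd d) T OPT ->
  subgraph H OPT -> H.2 != set0 ->
  [set a; b] \in H.2 ->
  c \in OPT.1 -> c \notin H.1 ->
  wd d [set c; a] <= gamma * (gamma - 1) * wd d [set a; b] ->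
  [set c; a] \in OPT.2.
Proof.
move=> metric_d gamma_gt1 stable_T OPT_min [wfH _ HO] _ abH cO cH.
apply: contraTT => caO; rewrite -ltNge !(wd_set2 metric_d) (metric_sym metric_d c a).
apply: (stable_nonedge_bound metric_d gamma_gt1 stable_T OPT_min) => //.
- exact: subsetP HO _ abH.
- by apply: contra cH; have /andP [_ /subsetP] := wfH _ abH; apply.
- by rewrite setUC.
Qed.
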